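(* Let $c>0$ and $0<p\le 1$, and define the hybrid ordinary-$\ell_p$ (HOP) function $l_{p,c}:\mathbb{R}\to\mathbb{R}$ by $$l_{p,c}(x)=\begin{cases} x^2/2, & |x|\le c,\\ \frac{1}{p}c^{2-p}|x|^p+\frac{c^2}{2}-\frac{1}{p}c^2, & |x|>c.\end{cases}$$ Define the (extended-real-valued) implicit regularizer $\varphi_{p,c}(y)=\sup_{t\in\mathbb{R}}\big[l_{p,c}(t)-\tfrac{(t-y)^2}{2}\big]$. Then for every $x\in\mathbb{R}$, $$l_{p,c}(x)=\min_{y\in\mathbb{R}}\ \frac{(x-y)^2}{2}+\varphi_{p,c}(y),$$ and this minimum is attained uniquely at $$y^\star=P_{\varphi_{p,c}}(x):=\max\{0,\ |x|-c^{2-p}|x|^{p-1}\}\cdot\operatorname{sign}(x),$$ with the convention $P_{\varphi_{p,c}}(0)=0$.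
   Context: $\operatorname{sign}(x)$ denotes the sign of $x$ (with $\operatorname{sign}(0)=0$). The function $l_{p,c}$ is continuously differentiable; for $p=1$ it is the Huber function. *)

From HB Require Import structures.
From mathcomp Require Import all_boot all_order all_algebra.
From mathcomp Require Import all_classical all_reals all_analysis.
Set Implicit Arguments. Unset Strict Implicit. Unset Printing Implicit Defensive.
Import Order.TTheory GRing.Theory Num.Theory.
Local Open Scope classical_set_scope.
Local Open Scope ring_scope.

Section HOP.
Variable R : realType.

Definition hop (p c x : R) : R :=
  if `|x| <= c then x ^+ 2 / 2
  else p^-1 * c `^ (2 - p) * `|x| `^ p + c ^+ 2 / 2 - p^-1 * c ^+ 2.

Definition hop_phi (p c y : R) : \bar R :=
  ereal_sup [set ((hop p c t - (t - y) ^+ 2 / 2)%:E) | t in [set: R]].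

Definition hop_prox (p c x : R) : R :=
  if x == 0 then 0
  else Num.max 0 (`|x| - c `^ (2 - p) * `|x| `^ (p - 1)) * Num.sg x.
End HOP.

(* Since [hop t - (t - y)^2/2 = t y - y^2/2 - hop_defect t], the function
   [hop_phi y + y^2/2] is the Fenchel conjugate of [hop_defect], and the claim is
   the Fenchel-Young inequality with its equality case.  Moreover
   [hop_defect t = rad |t|], where [rad] vanishes on [[0, c]] and equals
   [s^2/2 - c^(2-p) s^p / p + const] beyond [c]: it is convex because [s^p] is
   concave, and C^1 with derivative [shrink].  Hence [hop_prox] is a subgradient
   of [hop_defect] everywhere, and, being continuous, the only one. *)

From HB Require Import structures.
From mathcomp Require Import all_boot all_order all_algebra.
From mathcomp Require Import all_classical all_reals all_analysis.
From mathcomp Require Import ring lra.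
Import Order.TTheory GRing.Theory Num.Theory.
Import numFieldNormedType.Exports.
Set Implicit Arguments. Unset Strict Implicit. Unset Printing Implicit Defensive.
Local Open Scope classical_set_scope.
Local Open Scope ring_scope.

Section real_lemmas.
Context {R : realType}.
Implicit Types (p r s t u x y : R) (psi g : R -> R).

Lemma continuous_subgradient_unique psi g x y :
  (forall s t, psi s + g s * (t - s) <= psi t) -> {for x, continuous g} ->
  (forall t, psi x + y * (t - x) <= psi t) -> y = g x.
Proof.
move=> g_sub g_x y_sub.
have mono t : (y - g t) * (t - x) <= 0.
  by have := y_sub t; have := g_sub t x; rewrite mulrBl; lra.
apply/eqP; rewrite eq_le; apply/andP; split.
- apply: cvgr_to_ge (cvg_at_right_filter g_x) _; near=> t.
  have xt : x < t by near: t; exact: nbhs_right_gt.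
  by have := mono t; rewrite pmulr_lle0 ?subr_gt0 // subr_le0.
- apply: cvgr_to_le (cvg_at_left_filter g_x) _; near=> t.
  have tx : t < x by near: t; exact: nbhs_left_lt.
  by have := mono t; rewrite nmulr_lle0 ?subr_lt0 // subr_ge0.
Unshelve. all: by end_near.
Qed.

Lemma powR_mul_natE u r s (n : nat) :
  0 < u -> r + s = n%:R -> u `^ r * u `^ s = u ^+ n.
Proof.
move=> u0 rs; rewrite -powRD; last by rewrite (gt_eqF u0) implybT.
by rewrite rs powR_mulrn // ltW.
Qed.

(* Concavity of [s |-> s `^ p]: Young's inequality with exponents [1/p] and
   [1/(1-p)] gives [s^p u^(1-p) <= p s + (1-p) u]. *)
Lemma powR_le_tangent p s u : 0 < p -> p <= 1 -> 0 <= s -> 0 < u ->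
  s `^ p <= u `^ p + p * u `^ (p - 1) * (s - u).
Proof.
move=> p0 p1 s0 u0.
have [->|p_neq1] := eqVneq p 1.
  by rewrite subrr powRr0 !powRr1 ?(ltW u0) // !mul1r addrC subrK.
have q0 : 0 < 1 - p by rewrite subr_gt0 lt_neqAle p_neq1.
have := @conjugate_powR R (s `^ p) (u `^ (1 - p)) p^-1 (1 - p)^-1
  (powR_ge0 _ _) (powR_ge0 _ _).
rewrite !invr_gt0 => /(_ p0 q0).
rewrite !invrK -!powRrM !mulfV ?gt_eqF // !powRr1 ?(ltW u0) // subrKC.
move=> /(_ erefl) young.
have u_inv : u `^ (p - 1) * u `^ (1 - p) = 1.
  by rewrite (powR_mul_natE (n := 0)) //; ring.
have u_p : u `^ p = u `^ (p - 1) * u by rewrite mulrC mulr_powRB1 // ltW.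
have -> : u `^ p + p * u `^ (p - 1) * (s - u) =
    u `^ (p - 1) * (s * p + u * (1 - p)) by rewrite u_p; ring.
have -> : s `^ p = u `^ (p - 1) * (s `^ p * u `^ (1 - p)).
  by rewrite mulrCA u_inv mulr1.
by rewrite ler_wpM2l // ltW // powR_gt0.
Qed.

Lemma sgr_mulrB_le x t : Num.sg x * (t - x) <= `|t| - `|x|.
Proof.
have := ler_norm t; have := ler_norm (- t); rewrite normrN.
have [x0|x0|->] := ltrgt0P x.
- by rewrite gtr0_sg //; lra.
- by rewrite ltr0_sg //; lra.
- by rewrite sgr0; lra.
Qed.

Lemma near_sgr x : x != 0 -> \forall t \near x, Num.sg t = Num.sg x.
Proof.
case: ltgtP => // x0 _; near=> t.
  have t0 : t < 0 by near: t; exact: lt_nbhsl.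
  by rewrite !ltr0_sg.
have t0 : - t < 0 by near: t; apply: Nlt_nbhsl; rewrite oppr_lt0.
by rewrite !gtr0_sg // -oppr_lt0.
Unshelve. all: by end_near.
Qed.

End real_lemmas.

Section hop_defect.
Variables (R : realType) (p c : R).

Definition hop_defect (t : R) := t ^+ 2 / 2 - hop p c t.

Lemma hop_shift_le_iff t x y :
  hop p c t - (t - y) ^+ 2 / 2 <= hop p c x - (x - y) ^+ 2 / 2 <->
  hop_defect x + y * (t - x) <= hop_defect t.
Proof.
have shiftE z : z ^+ 2 / 2 - (z - y) ^+ 2 / 2 = z * y - y ^+ 2 / 2 by field.
by have := shiftE t; have := shiftE x; rewrite /hop_defect; split; lra.
Qed.

Hypotheses (c_gt0 : 0 < c) (p_gt0 : 0 < p) (p_le1 : p <= 1).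

Let a := c `^ (2 - p).
Let tail s := s ^+ 2 / 2 - p^-1 * a * s `^ p - c ^+ 2 / 2 + p^-1 * c ^+ 2.
Let slope u := u - a * u `^ (p - 1).
Let shrink u := Num.max 0 (slope u).
Let rad s := if s <= c then 0 else tail s.

Lemma hop_defectE t : hop_defect t = rad `|t|.
Proof.
rewrite /hop_defect /hop /rad /tail; case: ifP => _; first by rewrite subrr.
by rewrite real_normK ?num_real // /a; ring.
Qed.

Lemma tail_c : tail c = 0.
Proof.
rewrite /tail -mulrA (powR_mul_natE (n := 2)) ?ltW //; first by ring.
by rewrite subrK.
Qed.

Lemma tail_tangent s u : 0 <= s -> 0 < u -> tail u + slope u * (s - u) <= tail s.
Proof.
move=> s0 u0; have := powR_le_tangent p_gt0 p_le1 s0 u0.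
rewrite -subr_ge0 => concave.
have a_div_p : 0 <= p^-1 * a by rewrite mulr_ge0 ?invr_ge0 ?powR_ge0 ?ltW.
have gap : tail s - (tail u + slope u * (s - u)) =
  (s - u) ^+ 2 / 2 + p^-1 * a * (u `^ p + p * u `^ (p - 1) * (s - u) - s `^ p).
  by rewrite /tail /slope; field; exact: lt0r_neq0.
rewrite -subr_ge0 gap; apply: addr_ge0; last exact: mulr_ge0.
by rewrite divr_ge0 ?sqr_ge0.
Qed.

Lemma slopeE u : 0 < u -> slope u = (u `^ (2 - p) - a) * u `^ (p - 1).
Proof.
by move=> u0; rewrite mulrBl (powR_mul_natE (n := 1)) ?expr1 //; ring.
Qed.

Lemma ler_powR_2Bp u v : 0 <= u -> u <= v -> u `^ (2 - p) <= v `^ (2 - p).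
Proof.
move=> u0 uv; apply: ge0_ler_powR; rewrite ?nnegrE ?(le_trans u0 uv) //.
by rewrite subr_ge0 (le_trans p_le1) // ler1n.
Qed.

Lemma shrink_eq0 u : 0 <= u -> u <= c -> shrink u = 0.
Proof.
move=> u0 uc; apply: max_l; have [u_gt0|u_le0] := ltP 0 u.
  by rewrite slopeE // pmulr_lle0 ?powR_gt0 // subr_le0 /a ler_powR_2Bp ?(ltW u_gt0).
have -> : u = 0 by apply/le_anti; rewrite u0 u_le0.
by rewrite /slope sub0r oppr_le0 mulr_ge0 ?powR_ge0 ?ltW.
Qed.

Lemma shrink_ge_c u : c <= u -> shrink u = slope u.
Proof.
move=> cu; have u0 := lt_le_trans c_gt0 cu; apply: max_r.
by rewrite slopeE // pmulr_lge0 ?powR_gt0 // subr_ge0 /a ler_powR_2Bp ?(ltW c_gt0).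
Qed.

Lemma rad_tangent s u : 0 <= s -> 0 <= u -> rad u + shrink u * (s - u) <= rad s.
Proof.
move=> s0 u0.
have slope_c : slope c = 0 by rewrite -shrink_ge_c // shrink_eq0 // ltW.
have rad_ge0 : 0 <= rad s.
  rewrite /rad; case: ifP => // _.
  by have := tail_tangent s0 c_gt0; rewrite slope_c mul0r addr0 tail_c.
have rad_gt_c v : c < v -> rad v = tail v by rewrite /rad leNgt => ->.
have [uc|cu] := leP u c; first by rewrite shrink_eq0 // /rad uc mul0r addr0.
have u_gt0 := lt_trans c_gt0 cu.
have slope_u : 0 <= slope u by rewrite -shrink_ge_c ?(ltW cu) // le_max lexx.
rewrite shrink_ge_c ?(ltW cu) // rad_gt_c //.
have [sc|cs] := leP s c; last by rewrite rad_gt_c //; exact: tail_tangent.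
have := tail_tangent (ltW c_gt0) u_gt0; rewrite tail_c /rad sc.
by apply: le_trans; rewrite lerD2l ler_wpM2l ?lerD2r.
Qed.

Lemma hop_proxE x : hop_prox p c x = shrink `|x| * Num.sg x.
Proof. by rewrite /hop_prox; have [->|] := eqVneq x 0; rewrite ?sgr0 ?mulr0. Qed.

Lemma hop_prox_subgradient x t :
  hop_defect x + hop_prox p c x * (t - x) <= hop_defect t.
Proof.
rewrite !hop_defectE hop_proxE.
apply: le_trans (rad_tangent (normr_ge0 t) (normr_ge0 x)).
by rewrite lerD2l -mulrA ler_wpM2l ?le_max ?lexx ?sgr_mulrB_le.
Qed.

Lemma shrink_continuous u : 0 < u -> {for u, continuous shrink}.
Proof.
move=> u0; apply: continuous_max; first exact: cst_continuous.
apply: differentiable_continuous; apply: differentiableB => //.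
apply: differentiableM => //; apply/derivable1_diffP.
by apply: derivable_powR; rewrite in_itv /= andbT.
Qed.

Lemma hop_prox_near0 : \forall t \near (0 : R), hop_prox p c t = 0.
Proof.
near=> t; have tc : `|t| < c by near: t; exact: (@nbhs0_lt _ R^o).
by rewrite hop_proxE shrink_eq0 ?mul0r // ltW.
Unshelve. all: by end_near.
Qed.

Lemma hop_prox_continuous : continuous (hop_prox p c).
Proof.
move=> x; have [->|x0] := eqVneq x 0.
  apply: cvg_near_cst; apply: filterS hop_prox_near0 => t ->.
  by rewrite hop_proxE sgr0 mulr0.
have proxE : {near x, (fun t => shrink `|t| * Num.sg x) =1 hop_prox p c}.
  by apply: filterS (near_sgr x0) => t sgt; rewrite hop_proxE sgt.
apply: cvg_trans (near_eq_cvg proxE) _; rewrite hop_proxE.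
apply: cvgMl; apply: (continuous_comp (@norm_continuous _ R^o x)).
by apply: shrink_continuous; rewrite normr_gt0.
Qed.

End hop_defect.

Section hop_phi.
Variables (R : realType) (p c : R).
Hypotheses (c_gt0 : 0 < c) (p_gt0 : 0 < p) (p_le1 : p <= 1).

Lemma hop_phi_ge y t : ((hop p c t - (t - y) ^+ 2 / 2)%:E <= hop_phi p c y)%E.
Proof. by apply: ereal_sup_ubound; exists t. Qed.

Lemma hop_phi_prox x :
  hop_phi p c (hop_prox p c x) = (hop p c x - (x - hop_prox p c x) ^+ 2 / 2)%:E.
Proof.
apply/le_anti/andP; split; last exact: hop_phi_ge.
apply: ge_ereal_sup => _ [t _ <-]; rewrite lee_fin.
exact/hop_shift_le_iff/hop_prox_subgradient.
Qed.

Lemma hop_shift_argmax x y :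
  (forall t, hop p c t - (t - y) ^+ 2 / 2 <= hop p c x - (x - y) ^+ 2 / 2) ->
  y = hop_prox p c x.
Proof.
move=> y_max; apply: continuous_subgradient_unique.
- exact: hop_prox_subgradient.
- exact: hop_prox_continuous.
- by move=> t; apply/hop_shift_le_iff.
Qed.

End hop_phi.

Theorem mainTheorem1 (R : realType) (p c : R) (hc : 0 < c) (hp0 : 0 < p) (hp1 : p <= 1)
  (x : R) :
  (forall y : R, ((hop p c x)%:E <= ((x - y) ^+ 2 / 2)%:E + hop_phi p c y)%E) /\
  (((x - hop_prox p c x) ^+ 2 / 2)%:E + hop_phi p c (hop_prox p c x) = (hop p c x)%:E)%E /\
  (forall y : R, (((x - y) ^+ 2 / 2)%:E + hop_phi p c y = (hop p c x)%:E)%E ->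
     y = hop_prox p c x).
Proof.
split; [|split].
- move=> y; apply: le_trans (leeD2l _ (hop_phi_ge p c y x)).
  by rewrite -EFinD lee_fin addrC subrK.
- by rewrite hop_phi_prox // -EFinD addrC subrK.
- move=> y min_y; apply: hop_shift_argmax => // t.
  have := leeD2l ((x - y) ^+ 2 / 2)%:E (hop_phi_ge p c y t).
  by rewrite min_y -EFinD lee_fin; lra.
Qed.
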